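(* Let $\alpha: I\to M$ be a unit-speed curve on an oriented surface $M\subset E^3$ with Darboux frame $\{T,V,U\}$ and curvatures $k_g,k_n,\tau_g$, and assume $(k_n(s),\tau_g(s))\neq(0,0)$ for all $s$. Let $\gamma(s)=\alpha(s)+y_1(s)T(s)+y_2(s)V(s)+y_3(s)U(s)$, with $y_i$ smooth, be an associated curve whose tangent $\gamma'(s)$ is linearly dependent with $U(s)$, i.e. $\gamma'(s)=R(s)U(s)$ with $R(s)\neq0$ for all $s$. Then the following are equivalent: (i) $\gamma$ is a general helix; (ii) $\alpha$ is an isophote curve; (iii) $\alpha$ is a $D_o$-Darboux slant helix.
   Context: $M$ is an oriented surface in Euclidean 3-space $E^3$ and $\alpha:I\to M$ is a unit-speed curve with arc-length parameter $s$. Its Darboux frame $\{T,V,U\}$ consists of the unit tangent $T=\alpha'$, the unit surface normal $U$ of $M$ along $\alpha$, and $V=U\times T$; it satisfies $T'=k_gV+k_nU$, $V'=-k_gT+\tau_gU$, $U'=-k_nT-\tau_gV$, where $k_g,k_n,\tau_g$ are the geodesic curvature, normal curvature and geodesic torsion. A regular curve is a general helix if its unit tangent makes a constant angle with a fixed direction. $\alpha$ is an isophote curve if $\langle U,l\rangle$ is constant for some fixed unit vector $l$. The osculating Darboux vector field is $D_o=\tau_gT-k_nV$; $\alpha$ is a $D_o$-Darboux slant helix if $D_o/\|D_o\|$ makes a constant angle with a fixed unit direction. *)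

From Stdlib Require Import Reals.
From Coquelicot Require Import Coquelicot.
Open Scope R_scope.

Record vec3 := V3 { v1 : R; v2 : R; v3 : R }.

Definition vzero : vec3 := V3 0 0 0.
Definition vadd (a b : vec3) : vec3 := V3 (v1 a + v1 b) (v2 a + v2 b) (v3 a + v3 b).
Definition vscal (r : R) (a : vec3) : vec3 := V3 (r * v1 a) (r * v2 a) (r * v3 a).
Definition vsub (a b : vec3) : vec3 := vadd a (vscal (-1) b).
Definition dot (a b : vec3) : R := v1 a * v1 b + v2 a * v2 b + v3 a * v3 b.
Definition cross (a b : vec3) : vec3 :=
  V3 (v2 a * v3 b - v3 a * v2 b) (v3 a * v1 b - v1 a * v3 b) (v1 a * v2 b - v2 a * v1 b).
Definition vnorm (a : vec3) : R := sqrt (dot a a).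
Definition vunit (a : vec3) : vec3 := vscal (/ vnorm a) a.

Definition in_interval (a b : Rbar) (s : R) : Prop := Rbar_lt a s /\ Rbar_lt s b.

Definition has_vderive (f : R -> vec3) (s : R) (v : vec3) : Prop :=
  is_derive (fun t => v1 (f t)) s (v1 v) /\
  is_derive (fun t => v2 (f t)) s (v2 v) /\
  is_derive (fun t => v3 (f t)) s (v3 v).

Definition ex_vderive (f : R -> vec3) (s : R) : Prop :=
  ex_derive (fun t => v1 (f t)) s /\ ex_derive (fun t => v2 (f t)) s /\
  ex_derive (fun t => v3 (f t)) s.

Definition vDerive (f : R -> vec3) (s : R) : vec3 :=
  V3 (Derive (fun t => v1 (f t)) s) (Derive (fun t => v2 (f t)) s)
     (Derive (fun t => v3 (f t)) s).

Definition smooth_on (P : R -> Prop) (f : R -> R) : Prop :=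
  forall (n : nat) (s : R), P s -> ex_derive_n f n s.

Definition vsmooth_on (P : R -> Prop) (f : R -> vec3) : Prop :=
  smooth_on P (fun t => v1 (f t)) /\ smooth_on P (fun t => v2 (f t)) /\
  smooth_on P (fun t => v3 (f t)).

Definition darboux_frame (P : R -> Prop) (alpha T V U : R -> vec3)
  (kg kn tg : R -> R) : Prop :=
  forall s, P s ->
    has_vderive alpha s (T s) /\
    vnorm (T s) = 1 /\ vnorm (U s) = 1 /\ dot (T s) (U s) = 0 /\
    V s = cross (U s) (T s) /\
    has_vderive T s (vadd (vscal (kg s) (V s)) (vscal (kn s) (U s))) /\
    has_vderive V s (vadd (vscal (- kg s) (T s)) (vscal (tg s) (U s))) /\
    has_vderive U s (vadd (vscal (- kn s) (T s)) (vscal (- tg s) (V s))).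

Definition general_helix (P : R -> Prop) (c : R -> vec3) : Prop :=
  (forall s, P s -> ex_vderive c s /\ vDerive c s <> vzero) /\
  exists (d : vec3) (k : R), vnorm d = 1 /\
    forall s, P s -> dot (vunit (vDerive c s)) d = k.

Definition isophote (P : R -> Prop) (U : R -> vec3) : Prop :=
  exists (l : vec3) (k : R), vnorm l = 1 /\ forall s, P s -> dot (U s) l = k.

Definition osc_darboux (T V : R -> vec3) (kn tg : R -> R) (s : R) : vec3 :=
  vsub (vscal (tg s) (T s)) (vscal (kn s) (V s)).

Definition Do_slant_helix (P : R -> Prop) (T V : R -> vec3) (kn tg : R -> R) : Prop :=
  exists (d : vec3) (k : R), vnorm d = 1 /\
    forall s, P s -> dot (vunit (osc_darboux T V kn tg s)) d = k.

(* Since gamma' = Rf U with Rf continuous and nowhere zero, Rf has constant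
   sign and the unit tangent of gamma is that sign times U: (i) <-> (ii).
   For (ii) <-> (iii), rotate {T, V} in the tangent plane to {e, f} with
   e = D_o / |D_o| = cos theta T - sin theta V.  Then U' = -w f, e' = kappa f
   and f' = w U - kappa e, where w = |D_o| > 0 and kappa = kg - theta'.
   If <U, l> is constant then <f, l> = 0, so <e, l>^2 = 1 - <U, l>^2 is
   constant, hence so is the continuous function <e, l>.  Conversely, if
   <e, d> = c then kappa <f, d> = 0, and a connectedness argument shows that
   either <f, d> vanishes on the whole interval, and then <U, d> is constant,
   or kappa does, and then e is a constant unit vector orthogonal to U. *)

From Stdlib Require Import Reals Ranalysis5 Lra Classical ClassicalEpsilon.
From Coquelicot Require Import Coquelicot.
Open Scope R_scope.

Lemma sign_eq_of_mul_pos x y : 0 < x * y -> x / Rabs x = y / Rabs y.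
Proof.
  intros Hxy. assert (Hx : x <> 0) by nra. assert (Hy : y <> 0) by nra.
  destruct (Rlt_dec 0 x).
  - rewrite !Rabs_pos_eq by nra. field. split; assumption.
  - rewrite !Rabs_left by nra. field. split; assumption.
Qed.

Lemma sign_sqr x : x <> 0 -> x / Rabs x * (x / Rabs x) = 1.
Proof.
  intros Hx. destruct (Rlt_dec 0 x).
  - rewrite Rabs_pos_eq by lra. field. exact Hx.
  - rewrite Rabs_left by lra. field. exact Hx.
Qed.

Section Interval.

Variables a b : Rbar.
Local Notation I := (in_interval a b).

Lemma in_interval_nonempty : Rbar_lt a b -> exists s, I s.
Proof.
  unfold in_interval.
  destruct a as [x| |], b as [y| |]; simpl; intros Hab; try contradiction.
  - exists ((x + y) / 2); simpl; lra.
  - exists (x + 1); simpl; lra.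
  - exists (y - 1); simpl; lra.
  - exists 0; simpl; auto.
Qed.

Lemma in_interval_locally s : I s -> locally s I.
Proof.
  intros [Has Hsb]. destruct (Rbar_lt_locally a b s Has Hsb) as [e He].
  exists e. exact He.
Qed.

Lemma in_interval_convex s t c : I s -> I t -> s <= c <= t -> I c.
Proof.
  intros [Has _] [_ Htb] Hc. split.
  - destruct a as [x| |]; simpl in *; auto. lra.
  - destruct b as [y| |]; simpl in *; auto. lra.
Qed.

Lemma locally_on_interval (P : R -> Prop) s :
  (forall u, I u -> P u) -> I s -> locally s P.
Proof. intros HP Hs. exact (filter_imp I P HP (in_interval_locally s Hs)). Qed.

(* The indicator of a locally constant predicate is continuous, so the
   intermediate value theorem forbids it to jump between 1 and -1. *)
Lemma locally_constant_on_interval (P : R -> Prop) :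
  (forall t, I t -> locally t (fun u => P u <-> P t)) ->
  forall s t, I s -> I t -> P s -> P t.
Proof.
  intros HP.
  set (ind := fun u => if excluded_middle_informative (P u) then 1 else -1).
  assert (Hind : forall u, (ind u = 1 /\ P u) \/ (ind u = -1 /\ ~ P u)).
  { intros u. unfold ind. destruct (excluded_middle_informative (P u)); auto. }
  assert (Hcont : forall c, I c -> continuous ind c).
  { intros c Hc. apply (continuous_ext_loc ind (fun _ => ind c)).
    - generalize (HP c Hc). apply filter_imp. intros u Hu.
      destruct (Hind u) as [[-> ?] | [-> ?]], (Hind c) as [[-> ?] | [-> ?]];
        tauto || reflexivity.
    - apply continuous_const. }
  assert (Hconst : forall x y, x < y -> I x -> I y -> ind x = ind y).
  { intros x y Hxy Hx Hy. apply NNPP. intros Hneq.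
    assert (Hopp : ind x * ind y = -1).
    { destruct (Hind x) as [[Hx1 _] | [Hx1 _]], (Hind y) as [[Hy1 _] | [Hy1 _]];
        rewrite Hx1, Hy1 in *; lra || congruence. }
    destruct (IVT_interv (fun u => - ind x * ind u) x y) as [c [_ Hc]]; auto.
    - intros c Hc. apply continuity_pt_filterlim.
      apply (continuous_mult (fun _ => - ind x) ind); [apply continuous_const|].
      apply Hcont, (in_interval_convex x y c Hx Hy Hc).
    - destruct (Hind x) as [[-> _] | [-> _]]; lra.
    - lra.
    - destruct (Hind x) as [[Hx1 _] | [Hx1 _]], (Hind c) as [[Hc1 _] | [Hc1 _]];
        rewrite Hx1, Hc1 in Hc; lra. }
  intros s t Hs Ht Ps.
  assert (Hst : ind s = ind t).
  { destruct (Rtotal_order s t) as [Hlt | [<- | Hgt]]; auto.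
    symmetry. apply Hconst; auto. }
  destruct (Hind s) as [[Hs1 _] | [_ nPs]], (Hind t) as [[_ Pt] | [Ht1 _]]; auto.
  - lra.
  - tauto.
Qed.

Lemma continuous_locally_pos (g : R -> R) t :
  continuous g t -> 0 < g t -> locally t (fun u => 0 < g u).
Proof.
  intros Hc Hpos.
  apply continuity_pt_filterlim in Hc. rewrite continuity_pt_locally in Hc.
  generalize (Hc (mkposreal _ Hpos)). apply filter_imp.
  intros u Hu. apply Rabs_def2 in Hu. simpl in Hu. lra.
Qed.

Lemma continuous_locally_same_sign (g : R -> R) t :
  continuous g t -> g t <> 0 -> locally t (fun u => 0 < g u * g t).
Proof.
  intros Hc Hnz. apply continuous_locally_pos.
  - apply (continuous_mult g (fun _ => g t)); auto. apply continuous_const.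
  - nra.
Qed.

Lemma continuous_locally_nonzero (g : R -> R) t :
  continuous g t -> g t <> 0 -> locally t (fun u => g u <> 0).
Proof.
  intros Hc Hnz. generalize (continuous_locally_same_sign g t Hc Hnz).
  apply filter_imp. intros u Hu Hu0. rewrite Hu0 in Hu. lra.
Qed.

Lemma continuous_nonzero_same_sign (g : R -> R) :
  (forall s, I s -> continuous g s /\ g s <> 0) ->
  forall s t, I s -> I t -> 0 < g s * g t.
Proof.
  intros Hg s t Hs Ht.
  apply (locally_constant_on_interval (fun u => 0 < g s * g u)) with s; auto.
  - intros u Hu. destruct (Hg u Hu) as [Hc Hnz].
    generalize (continuous_locally_same_sign g u Hc Hnz). apply filter_imp.
    intros v Hv. split; intros Hsv.
    + assert (0 < (g s * g v) * (g v * g u)) by (apply Rmult_lt_0_compat; auto). nra.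
    + assert (0 < (g s * g u) * (g v * g u)) by (apply Rmult_lt_0_compat; auto). nra.
  - destruct (Hg s Hs). nra.
Qed.

Lemma continuous_eq_of_sqr_eq (f : R -> R) :
  (forall s, I s -> continuous f s) ->
  (forall s t, I s -> I t -> f s * f s = f t * f t) ->
  forall s t, I s -> I t -> f s = f t.
Proof.
  intros Hc Hsq s t Hs Ht.
  destruct (Req_dec (f t) 0) as [Hz | Hnz].
  - specialize (Hsq s t Hs Ht). rewrite Hz in *. nra.
  - assert (Hsign : 0 < f s * f t).
    { apply continuous_nonzero_same_sign; auto. intros u Hu. split; auto.
      intros Hu0. specialize (Hsq u t Hu Ht). rewrite Hu0 in Hsq. nra. }
    specialize (Hsq s t Hs Ht).
    assert (Hfac : (f s - f t) * (f s + f t) = 0) by lra.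
    apply Rmult_integral in Hfac. destruct Hfac; nra.
Qed.

Lemma is_derive_zero_const (f : R -> R) :
  (forall s, I s -> is_derive f s 0) ->
  forall s t, I s -> I t -> f s = f t.
Proof.
  intros Hf.
  assert (Hlt : forall s t, s < t -> I s -> I t -> f s = f t).
  { intros s t Hst Hs Ht.
    assert (Hd : forall c, s <= c <= t -> derivable_pt_lim f c ((fun _ => 0) c)).
    { intros c Hc. apply is_derive_Reals, Hf, (in_interval_convex s t c Hs Ht Hc). }
    destruct (MVT_cor2 f (fun _ => 0) s t Hst Hd) as [c [Hc _]]. lra. }
  intros s t Hs Ht. destruct (Rtotal_order s t) as [Hst | [<- | Hts]]; auto.
  symmetry; auto.
Qed.

Lemma is_derive_const_on (f : R -> R) k s :
  (forall u, I u -> f u = k) -> I s -> is_derive f s 0.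
Proof.
  intros Hf Hs. apply (is_derive_ext_loc (fun _ => k)).
  - apply locally_on_interval; auto. intros u Hu. symmetry; auto.
  - apply (is_derive_const (K := R_AbsRing) (V := R_NormedModule)).
Qed.

Lemma is_derive_isolated_zero (f : R -> R) (t l : R) :
  is_derive f t l -> l <> 0 -> f t = 0 -> locally t (fun u => u <> t -> f u <> 0).
Proof.
  intros Hd Hl Hf0. apply is_derive_Reals in Hd.
  destruct (Hd (Rabs l) (Rabs_pos_lt l Hl)) as [e He].
  cut (forall u : R, Rabs (u - t) < e -> u <> t -> f u <> 0).
  { intros Hball. exists e. exact Hball. }
  intros u Hu Hut Hfu.
  assert (Hh : u - t <> 0) by lra.
  specialize (He (u - t) Hh Hu). replace (t + (u - t)) with u in He by ring.
  rewrite Hfu, Hf0 in He. replace ((0 - 0) / (u - t) - l) with (- l) in He by (field; auto).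
  rewrite Rabs_Ropp in He. lra.
Qed.

Lemma is_derive_unique_value (f : R -> R) (s l1 l2 : R) :
  is_derive f s l1 -> is_derive f s l2 -> l1 = l2.
Proof.
  intros H1 H2. rewrite <- (is_derive_unique _ _ _ H1). exact (is_derive_unique _ _ _ H2).
Qed.

Lemma is_derive_locally_zero (f : R -> R) (t l : R) :
  is_derive f t l -> locally t (fun u => f u = 0) -> l = 0.
Proof.
  intros Hd Hloc. apply is_derive_unique in Hd. rewrite <- Hd.
  rewrite (Derive_ext_loc f (fun _ => 0)); auto. apply Derive_const.
Qed.

(* The interval splits into the open sets where [beta], resp. [k], vanishes
   identically near the point; the non-degeneracy hypothesis makes them cover
   it and keeps them disjoint. *)
Lemma mul_eq0_on_interval (k beta beta' : R -> R) :
  (forall s, I s -> continuous k s) ->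
  (forall s, I s -> is_derive beta s (beta' s)) ->
  (forall s, I s -> k s * beta s = 0) ->
  (forall s, I s -> beta s = 0 -> k s = 0 -> beta' s <> 0) ->
  (forall s, I s -> beta s = 0) \/ (forall s, I s -> k s = 0).
Proof.
  intros Hk Hbeta Hmul Hnondeg.
  set (Pb := fun t => locally t (fun u => beta u = 0)).
  set (Pk := fun t => locally t (fun u => k u = 0)).
  assert (Hdisj : forall t, I t -> Pb t -> Pk t -> False).
  { intros t Ht Hb Hkt.
    apply (Hnondeg t Ht (locally_singleton _ _ Hb) (locally_singleton _ _ Hkt)).
    exact (is_derive_locally_zero beta t _ (Hbeta t Ht) Hb). }
  assert (Hcover : forall t, I t -> ~ Pb t -> Pk t).
  { intros t Ht Hnb. unfold Pk.
    assert (Hkt : k t = 0).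
    { apply NNPP. intros Hkt. apply Hnb. unfold Pb.
      generalize (filter_and _ _ (continuous_locally_nonzero k t (Hk t Ht) Hkt)
                    (in_interval_locally t Ht)).
      apply filter_imp. intros u [Hu HIu]. specialize (Hmul u HIu). nra. }
    destruct (Req_dec (beta t) 0) as [Hb0 | Hb0].
    - generalize (filter_and _ _
        (is_derive_isolated_zero beta t _ (Hbeta t Ht) (Hnondeg t Ht Hb0 Hkt) Hb0)
        (in_interval_locally t Ht)).
      apply filter_imp. intros u [Hu HIu].
      destruct (Req_dec u t) as [-> | Hut]; auto.
      specialize (Hmul u HIu). specialize (Hu Hut). nra.
    - assert (Hc : continuous beta t)
        by (apply (ex_derive_continuous (V := R_NormedModule)); exists (beta' t); auto).
      generalize (filter_and _ _ (continuous_locally_nonzero beta t Hc Hb0)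
                    (in_interval_locally t Ht)).
      apply filter_imp. intros u [Hu HIu]. specialize (Hmul u HIu). nra. }
  assert (Hloc : forall t, I t -> locally t (fun u => Pb u <-> Pb t)).
  { intros t Ht. destruct (classic (Pb t)) as [Hb | Hnb].
    - generalize (locally_locally _ _ Hb). apply filter_imp. tauto.
    - generalize (filter_and _ _ (locally_locally _ _ (Hcover t Ht Hnb))
                    (in_interval_locally t Ht)).
      apply filter_imp. intros u [Hu HIu]. split; [|tauto].
      intros Hbu. exfalso. exact (Hdisj u HIu Hbu Hu). }
  destruct (classic (exists t, I t /\ Pb t)) as [[t [Ht Hb]] | Hnone].
  - left. intros s Hs.
    exact (locally_singleton _ _ (locally_constant_on_interval Pb Hloc t s Ht Hs Hb)).
  - right. intros s Hs.
    apply (locally_singleton _ _ (Hcover s Hs (fun Hb => Hnone (ex_intro _ s (conj Hs Hb))))).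
Qed.

End Interval.

Section C1.

Variables a b : Rbar.
Local Notation I := (in_interval a b).

Definition C1_on (f : R -> R) : Prop :=
  forall s, I s -> ex_derive f s /\ continuous (Derive f) s.

Lemma C1_on_is_derive f s : C1_on f -> I s -> is_derive f s (Derive f s).
Proof. intros Hf Hs. apply Derive_correct, Hf, Hs. Qed.

Lemma C1_on_continuous f s : C1_on f -> I s -> continuous f s.
Proof. intros Hf Hs. apply (ex_derive_continuous (V := R_NormedModule)), Hf, Hs. Qed.

Lemma continuous_Derive_on f g s :
  (forall u, I u -> is_derive f u (g u)) -> I s -> continuous g s ->
  continuous (Derive f) s.
Proof.
  intros Hfg Hs Hg. apply (continuous_ext_loc _ g); auto.
  apply (locally_on_interval a b); auto.
  intros u Hu. symmetry. apply is_derive_unique, Hfg, Hu.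
Qed.

Lemma C1_on_ext f g : (forall s, I s -> f s = g s) -> C1_on g -> C1_on f.
Proof.
  intros Hfg Hg s Hs.
  assert (Hloc : forall u, I u -> locally u (fun v => g v = f v))
    by (intros u Hu; apply (locally_on_interval a b); auto; intros; symmetry; auto).
  split.
  - apply (ex_derive_ext_loc g); [apply Hloc | apply Hg]; auto.
  - apply (continuous_Derive_on f (Derive g)); [|auto | apply Hg, Hs].
    intros u Hu. apply (is_derive_ext_loc g); [apply Hloc | apply C1_on_is_derive]; auto.
Qed.

Lemma C1_on_plus f g : C1_on f -> C1_on g -> C1_on (fun t => f t + g t).
Proof.
  intros Hf Hg s Hs.
  assert (Hd : forall u, I u -> is_derive (fun t => f t + g t) u (Derive f u + Derive g u))
    by (intros u Hu; apply (is_derive_plus (V := R_NormedModule));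
        apply C1_on_is_derive; auto).
  split; [exists (Derive f s + Derive g s); auto|].
  apply (continuous_Derive_on _ _ s Hd Hs).
  apply (continuous_plus (V := R_NormedModule)); [apply Hf | apply Hg]; auto.
Qed.

Lemma C1_on_opp f : C1_on f -> C1_on (fun t => - f t).
Proof.
  intros Hf s Hs.
  assert (Hd : forall u, I u -> is_derive (fun t => - f t) u (- Derive f u))
    by (intros u Hu; apply (is_derive_opp (V := R_NormedModule));
        apply C1_on_is_derive; auto).
  split; [exists (- Derive f s); auto|].
  apply (continuous_Derive_on _ _ s Hd Hs).
  apply (continuous_opp (V := R_NormedModule)), Hf, Hs.
Qed.

Lemma C1_on_mult f g : C1_on f -> C1_on g -> C1_on (fun t => f t * g t).
Proof.
  intros Hf Hg s Hs.
  assert (Hd : forall u, I u ->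
            is_derive (fun t => f t * g t) u (Derive f u * g u + f u * Derive g u))
    by (intros u Hu; apply (is_derive_mult f g); auto using C1_on_is_derive;
        intros; apply Rmult_comm).
  split; [eexists; apply Hd, Hs|].
  apply (continuous_Derive_on _ _ s Hd Hs).
  apply (continuous_plus (V := R_NormedModule)); apply (continuous_mult (K := R_AbsRing)).
  - apply Hf, Hs.
  - apply C1_on_continuous; auto.
  - apply C1_on_continuous; auto.
  - apply Hg, Hs.
Qed.

Lemma C1_on_inv f : C1_on f -> (forall s, I s -> f s <> 0) -> C1_on (fun t => / f t).
Proof.
  intros Hf Hnz s Hs.
  assert (Hd : forall u, I u -> is_derive (fun t => / f t) u (- Derive f u / f u ^ 2))
    by (intros u Hu; apply is_derive_inv; auto using C1_on_is_derive).
  split; [eexists; apply Hd, Hs|].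
  apply (continuous_Derive_on _ _ s Hd Hs).
  apply (continuous_mult (K := R_AbsRing)).
  - apply (continuous_opp (V := R_NormedModule)), Hf, Hs.
  - apply continuous_Rinv_comp; [|apply pow_nonzero; auto].
    apply (continuous_mult (K := R_AbsRing)); [apply C1_on_continuous; auto|].
    apply (continuous_mult (K := R_AbsRing)); [apply C1_on_continuous; auto|].
    apply continuous_const.
Qed.

Lemma C1_on_sqrt f : C1_on f -> (forall s, I s -> 0 < f s) -> C1_on (fun t => sqrt (f t)).
Proof.
  intros Hf Hpos s Hs.
  assert (Hd : forall u, I u -> is_derive (fun t => sqrt (f t)) u (Derive f u / (2 * sqrt (f u))))
    by (intros u Hu; apply is_derive_sqrt; auto using C1_on_is_derive).
  split; [eexists; apply Hd, Hs|].
  apply (continuous_Derive_on _ _ s Hd Hs).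
  apply (continuous_mult (K := R_AbsRing)); [apply Hf, Hs|].
  apply continuous_Rinv_comp.
  - apply (continuous_mult (K := R_AbsRing)); [apply continuous_const|].
    apply continuous_sqrt_comp, C1_on_continuous; auto.
  - apply Rgt_not_eq, Rmult_lt_0_compat; [lra | apply sqrt_lt_R0; auto].
Qed.

Lemma smooth_C1_on f : smooth_on I f -> C1_on f.
Proof.
  intros Hf s Hs. split.
  - exact (Hf 1%nat s Hs).
  - apply (ex_derive_continuous (V := R_NormedModule)). exact (Hf 2%nat s Hs).
Qed.

Lemma smooth_Derive_C1_on f : smooth_on I f -> C1_on (Derive f).
Proof.
  intros Hf s Hs. split.
  - exact (Hf 2%nat s Hs).
  - apply (ex_derive_continuous (V := R_NormedModule)). exact (Hf 3%nat s Hs).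
Qed.

End C1.

Lemma vec3_eq x y : v1 x = v1 y -> v2 x = v2 y -> v3 x = v3 y -> x = y.
Proof. destruct x, y; simpl; intros -> -> ->; reflexivity. Qed.

Lemma dot_comm x y : dot x y = dot y x.
Proof. unfold dot; ring. Qed.

Lemma dot_vadd_l x y z : dot (vadd x y) z = dot x z + dot y z.
Proof. unfold dot; simpl; ring. Qed.

Lemma dot_vscal_l r x z : dot (vscal r x) z = r * dot x z.
Proof. unfold dot; simpl; ring. Qed.

Lemma dot_vadd_r x y z : dot x (vadd y z) = dot x y + dot x z.
Proof. unfold dot; simpl; ring. Qed.

Lemma dot_vscal_r r x z : dot x (vscal r z) = r * dot x z.
Proof. unfold dot; simpl; ring. Qed.

Lemma dot_self_ge0 x : 0 <= dot x x.
Proof. unfold dot; nra. Qed.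

Lemma vnorm_eq1 x : vnorm x = 1 <-> dot x x = 1.
Proof.
  unfold vnorm. split; intros H.
  - rewrite <- (sqrt_sqrt (dot x x)) by apply dot_self_ge0. rewrite H; ring.
  - rewrite H. apply sqrt_1.
Qed.

Lemma vscal_1 x : vscal 1 x = x.
Proof. apply vec3_eq; simpl; ring. Qed.

Lemma vunit_vscal r x : dot x x = 1 -> r <> 0 -> vunit (vscal r x) = vscal (r / Rabs r) x.
Proof.
  intros Hx Hr.
  assert (Hn : vnorm (vscal r x) = Rabs r).
  { unfold vnorm. rewrite dot_vscal_l, dot_comm, dot_vscal_l, Hx, Rmult_1_r.
    apply sqrt_Rsqr_abs. }
  unfold vunit. rewrite Hn. apply vec3_eq; simpl; field; apply Rabs_no_R0, Hr.
Qed.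

Lemma dot_cross_l u t : dot (cross u t) u = 0.
Proof. unfold dot, cross; simpl; ring. Qed.

Lemma dot_cross_r u t : dot (cross u t) t = 0.
Proof. unfold dot, cross; simpl; ring. Qed.

Lemma dot_cross_cross u t : dot (cross u t) (cross u t) = dot u u * dot t t - dot u t ^ 2.
Proof. unfold dot, cross; simpl; ring. Qed.

Lemma dot_cross_parseval t u d : dot t t = 1 -> dot u u = 1 -> dot t u = 0 ->
  dot d d = dot t d ^ 2 + dot (cross u t) d ^ 2 + dot u d ^ 2.
Proof.
  intros Ht Hu Htu.
  assert (Hlagrange : dot (cross u t) d ^ 2 = dot u u * dot t t * dot d d
    + 2 * dot u t * dot t d * dot d u - dot u u * dot t d ^ 2 - dot t t * dot u d ^ 2
    - dot d d * dot u t ^ 2) by (unfold dot, cross; simpl; ring).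
  rewrite Hlagrange, (dot_comm u t), Ht, Hu, Htu, (dot_comm d u). ring.
Qed.

Lemma has_vderive_vadd X Y s X' Y' : has_vderive X s X' -> has_vderive Y s Y' ->
  has_vderive (fun t => vadd (X t) (Y t)) s (vadd X' Y').
Proof.
  intros (HX1 & HX2 & HX3) (HY1 & HY2 & HY3).
  split; [|split]; apply (is_derive_plus (V := R_NormedModule)); auto.
Qed.

Lemma has_vderive_vscal f X s f' X' : is_derive f s f' -> has_vderive X s X' ->
  has_vderive (fun t => vscal (f t) (X t)) s (vadd (vscal f' (X s)) (vscal (f s) X')).
Proof.
  intros Hf (HX1 & HX2 & HX3).
  split; [|split]; apply (is_derive_mult f); auto; intros; apply Rmult_comm.
Qed.

Lemma has_vderive_unique X s X1 X2 : has_vderive X s X1 -> has_vderive X s X2 -> X1 = X2.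
Proof.
  intros (H1 & H2 & H3) (G1 & G2 & G3).
  apply vec3_eq; [ exact (is_derive_unique_value _ _ _ _ H1 G1)
                 | exact (is_derive_unique_value _ _ _ _ H2 G2)
                 | exact (is_derive_unique_value _ _ _ _ H3 G3) ].
Qed.

Lemma has_vderive_vDerive X s X' : has_vderive X s X' -> vDerive X s = X'.
Proof.
  intros (H1 & H2 & H3). apply vec3_eq; simpl; apply is_derive_unique; auto.
Qed.

Lemma is_derive_dot_const X s X' d : has_vderive X s X' ->
  is_derive (fun t => dot (X t) d) s (dot X' d).
Proof.
  intros (H1 & H2 & H3). unfold dot.
  repeat apply (is_derive_plus (V := R_NormedModule));
    apply (is_derive_scal_l (K := R_AbsRing) (V := R_NormedModule)); auto.
Qed.

Section VectorCalculus.

Variables a b : Rbar.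
Local Notation I := (in_interval a b).

Lemma has_vderive_ext_on X Y s X' :
  (forall u, I u -> Y u = X u) -> I s -> has_vderive X s X' -> has_vderive Y s X'.
Proof.
  intros HXY Hs (H1 & H2 & H3).
  assert (Hloc : forall f : vec3 -> R,
            locally s (fun u => f (X u) = f (Y u)))
    by (intros f; apply (locally_on_interval a b); auto; intros u Hu; rewrite HXY; auto).
  split; [|split]; eapply is_derive_ext_loc;
    [apply (Hloc v1) | exact H1 | apply (Hloc v2) | exact H2 | apply (Hloc v3) | exact H3].
Qed.

Lemma has_vderive_zero_const X :
  (forall s, I s -> has_vderive X s vzero) -> forall s t, I s -> I t -> X s = X t.
Proof.
  intros HX s t Hs Ht.
  apply vec3_eq;
    [ apply (is_derive_zero_const a b (fun u => v1 (X u)))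
    | apply (is_derive_zero_const a b (fun u => v2 (X u)))
    | apply (is_derive_zero_const a b (fun u => v3 (X u))) ];
    auto; intros u Hu; apply HX, Hu.
Qed.

Definition vC1_on (X : R -> vec3) : Prop :=
  C1_on a b (fun t => v1 (X t)) /\ C1_on a b (fun t => v2 (X t)) /\
  C1_on a b (fun t => v3 (X t)).

Lemma vC1_on_ext X Y : (forall s, I s -> X s = Y s) -> vC1_on Y -> vC1_on X.
Proof.
  intros HXY (H1 & H2 & H3).
  split; [|split]; [ eapply C1_on_ext; [|exact H1] | eapply C1_on_ext; [|exact H2]
                   | eapply C1_on_ext; [|exact H3] ];
    intros s Hs; rewrite HXY; auto.
Qed.

Lemma vsmooth_vC1_on X : vsmooth_on I X -> vC1_on X.
Proof. intros (H1 & H2 & H3). split; [|split]; apply smooth_C1_on; auto. Qed.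

Lemma vsmooth_vDerive_vC1_on X : vsmooth_on I X -> vC1_on (vDerive X).
Proof. intros (H1 & H2 & H3). split; [|split]; apply smooth_Derive_C1_on; auto. Qed.

Lemma C1_on_dot X Y : vC1_on X -> vC1_on Y -> C1_on a b (fun t => dot (X t) (Y t)).
Proof.
  intros (X1 & X2 & X3) (Y1 & Y2 & Y3). unfold dot.
  apply C1_on_plus; [apply C1_on_plus|]; apply C1_on_mult; assumption.
Qed.

Lemma vC1_on_cross X Y : vC1_on X -> vC1_on Y -> vC1_on (fun t => cross (X t) (Y t)).
Proof.
  intros (X1 & X2 & X3) (Y1 & Y2 & Y3). unfold vC1_on, cross, Rminus; simpl.
  split; [|split];
    (apply C1_on_plus; [apply C1_on_mult | apply C1_on_opp, C1_on_mult]; assumption).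
Qed.

Lemma continuous_dot_vDerive X Y s : vC1_on X -> vC1_on Y -> I s ->
  continuous (fun t => dot (vDerive X t) (Y t)) s.
Proof.
  intros (X1 & X2 & X3) (Y1 & Y2 & Y3) Hs. unfold dot, vDerive; simpl.
  apply (continuous_plus (V := R_NormedModule));
    [apply (continuous_plus (V := R_NormedModule))|];
    apply (continuous_mult (K := R_AbsRing));
    [ apply (proj2 (X1 s Hs)) | apply (C1_on_continuous a b); assumption
    | apply (proj2 (X2 s Hs)) | apply (C1_on_continuous a b); assumption
    | apply (proj2 (X3 s Hs)) | apply (C1_on_continuous a b); assumption ].
Qed.

End VectorCalculus.

Lemma rotated_frame_deriv_unit (t v u : vec3) c sn c' sn' kg kn tg :
  c * c + sn * sn = 1 -> c * c' + sn * sn' = 0 -> c * kn = sn * tg ->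
  vadd (vadd (vscal c' t) (vscal c (vadd (vscal kg v) (vscal kn u))))
       (vadd (vscal (- sn') v) (vscal (- sn) (vadd (vscal (- kg) t) (vscal tg u))))
  = vscal (kg - (c * sn' - sn * c')) (vadd (vscal sn t) (vscal c v)).
Proof.
  intros Hunit Hderiv Hcross.
  assert (Hcoord : forall x y z,
    c' * x + c * (kg * y + kn * z) + (- sn' * y + - sn * (- kg * x + tg * z))
    = (kg - (c * sn' - sn * c')) * (sn * x + c * y)).
  { intros x y z. apply Rminus_diag_uniq.
    transitivity (x * (c' * (1 - (c * c + sn * sn)) + c * (c * c' + sn * sn'))
      - y * (sn' * (1 - (c * c + sn * sn)) + sn * (c * c' + sn * sn'))
      + z * (c * kn - sn * tg)); [ring|].
    rewrite Hunit, Hderiv, Hcross. ring. }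
  apply vec3_eq; simpl; apply Hcoord.
Qed.

Lemma rotated_frame_deriv_perp (t v u : vec3) c sn c' sn' kg kn tg w :
  c * c + sn * sn = 1 -> c * c' + sn * sn' = 0 -> sn * kn + c * tg = w ->
  vadd (vadd (vscal sn' t) (vscal sn (vadd (vscal kg v) (vscal kn u))))
       (vadd (vscal c' v) (vscal c (vadd (vscal (- kg) t) (vscal tg u))))
  = vsub (vscal w u) (vscal (kg - (c * sn' - sn * c')) (vadd (vscal c t) (vscal (- sn) v))).
Proof.
  intros Hunit Hderiv Hnorm.
  assert (Hcoord : forall x y z,
    sn' * x + sn * (kg * y + kn * z) + (c' * y + c * (- kg * x + tg * z))
    = w * z + -1 * ((kg - (c * sn' - sn * c')) * (c * x + - sn * y))).
  { intros x y z. apply Rminus_diag_uniq.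
    transitivity (x * (sn' * (1 - (c * c + sn * sn)) + sn * (c * c' + sn * sn'))
      + y * (c' * (1 - (c * c + sn * sn)) + c * (c * c' + sn * sn'))
      + z * (sn * kn + c * tg - w)); [ring|].
    rewrite Hunit, Hderiv, Hnorm. ring. }
  apply vec3_eq; simpl; apply Hcoord.
Qed.

Section DarbouxFrame.

Variables (a b : Rbar) (alpha T V U : R -> vec3) (kg kn tg : R -> R).
Local Notation I := (in_interval a b).

Hypothesis alpha_smooth : vsmooth_on I alpha.
Hypothesis U_smooth : vsmooth_on I U.
Hypothesis frame : darboux_frame I alpha T V U kg kn tg.
Hypothesis nondegenerate : forall s, I s -> kn s <> 0 \/ tg s <> 0.

Lemma darboux_orthonormal s : I s ->
  dot (T s) (T s) = 1 /\ dot (V s) (V s) = 1 /\ dot (U s) (U s) = 1 /\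
  dot (T s) (V s) = 0 /\ dot (T s) (U s) = 0 /\ dot (V s) (U s) = 0.
Proof.
  intros Hs. destruct (frame s Hs) as (_ & HT & HU & HTU & HV & _).
  apply vnorm_eq1 in HT, HU. rewrite HV.
  repeat split; auto.
  - rewrite dot_cross_cross, HT, HU, dot_comm, HTU. ring.
  - rewrite dot_comm. apply dot_cross_r.
  - apply dot_cross_l.
Qed.

Lemma darboux_parseval s d : I s ->
  dot d d = dot (T s) d ^ 2 + dot (V s) d ^ 2 + dot (U s) d ^ 2.
Proof.
  intros Hs. destruct (frame s Hs) as (_ & _ & _ & _ & HV & _).
  destruct (darboux_orthonormal s Hs) as (HT & _ & HU & _ & HTU & _).
  rewrite HV. apply dot_cross_parseval; auto.
Qed.

Lemma vDerive_T s : I s -> vDerive T s = vadd (vscal (kg s) (V s)) (vscal (kn s) (U s)).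
Proof. intros Hs. apply has_vderive_vDerive, frame, Hs. Qed.

Lemma vDerive_U s : I s -> vDerive U s = vadd (vscal (- kn s) (T s)) (vscal (- tg s) (V s)).
Proof. intros Hs. apply has_vderive_vDerive, frame, Hs. Qed.

Lemma T_vC1 : vC1_on a b T.
Proof.
  apply (vC1_on_ext a b T (vDerive alpha)); [|apply vsmooth_vDerive_vC1_on, alpha_smooth].
  intros s Hs. symmetry. apply has_vderive_vDerive, frame, Hs.
Qed.

Lemma V_vC1 : vC1_on a b V.
Proof.
  apply (vC1_on_ext a b V (fun s => cross (U s) (T s))).
  - intros s Hs. apply frame, Hs.
  - apply vC1_on_cross; [apply vsmooth_vC1_on, U_smooth | apply T_vC1].
Qed.

Lemma kn_C1 : C1_on a b kn.
Proof.
  apply (C1_on_ext a b kn (fun s => - dot (vDerive U s) (T s))).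
  - intros s Hs. rewrite vDerive_U, dot_vadd_l, !dot_vscal_l by exact Hs.
    destruct (darboux_orthonormal s Hs) as (HT & _ & _ & HTV & _). rewrite HT, dot_comm, HTV. ring.
  - apply C1_on_opp, C1_on_dot; [apply vsmooth_vDerive_vC1_on, U_smooth | apply T_vC1].
Qed.

Lemma tg_C1 : C1_on a b tg.
Proof.
  apply (C1_on_ext a b tg (fun s => - dot (vDerive U s) (V s))).
  - intros s Hs. rewrite vDerive_U, dot_vadd_l, !dot_vscal_l by exact Hs.
    destruct (darboux_orthonormal s Hs) as (_ & HV & _ & HTV & _). rewrite HV, HTV. ring.
  - apply C1_on_opp, C1_on_dot; [apply vsmooth_vDerive_vC1_on, U_smooth | apply V_vC1].
Qed.

Lemma kg_continuous s : I s -> continuous kg s.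
Proof.
  intros Hs. apply (continuous_ext_loc _ (fun t => dot (vDerive T t) (V t))).
  - apply (locally_on_interval a b); auto. intros u Hu.
    assert (Hkg : dot (vDerive T u) (V u) = kg u).
    { rewrite vDerive_T, dot_vadd_l, !dot_vscal_l by exact Hu.
      destruct (darboux_orthonormal u Hu) as (_ & HV & _ & _ & _ & HVU).
      rewrite HV, dot_comm, HVU. ring. }
    exact Hkg.
  - apply (continuous_dot_vDerive a b); [apply T_vC1 | apply V_vC1 | exact Hs].
Qed.

(* With theta the angle from [T] to D_o: [osc_cos] = cos theta, [osc_sin] =
   sin theta, [osc_curv] = kg - theta', and [osc_unit], [osc_perp] are the
   frame e, f of the header. *)
Definition osc_norm s := sqrt (tg s * tg s + kn s * kn s).
Definition osc_cos s := tg s / osc_norm s.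
Definition osc_sin s := kn s / osc_norm s.
Definition osc_curv s := kg s - (osc_cos s * Derive osc_sin s - osc_sin s * Derive osc_cos s).
Definition osc_unit s := vadd (vscal (osc_cos s) (T s)) (vscal (- osc_sin s) (V s)).
Definition osc_perp s := vadd (vscal (osc_sin s) (T s)) (vscal (osc_cos s) (V s)).

Lemma osc_norm_sqr_pos s : I s -> 0 < tg s * tg s + kn s * kn s.
Proof. intros Hs. destruct (nondegenerate s Hs); nra. Qed.

Lemma osc_norm_pos s : I s -> 0 < osc_norm s.
Proof. intros Hs. apply sqrt_lt_R0, osc_norm_sqr_pos, Hs. Qed.

Lemma osc_norm_sqr s : I s -> osc_norm s * osc_norm s = tg s * tg s + kn s * kn s.
Proof. intros Hs. apply sqrt_sqrt. left. apply osc_norm_sqr_pos, Hs. Qed.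

Lemma osc_cos_sin_sqr s : I s -> osc_cos s * osc_cos s + osc_sin s * osc_sin s = 1.
Proof.
  intros Hs. pose proof (osc_norm_pos s Hs). unfold osc_cos, osc_sin.
  transitivity ((tg s * tg s + kn s * kn s) / (osc_norm s * osc_norm s)); [field; lra|].
  rewrite osc_norm_sqr by exact Hs. field. pose proof (osc_norm_sqr_pos s Hs). lra.
Qed.

Lemma osc_inv_norm_C1 : C1_on a b (fun s => / osc_norm s).
Proof.
  apply C1_on_inv.
  - apply C1_on_sqrt; [|exact osc_norm_sqr_pos].
    apply C1_on_plus; apply C1_on_mult; auto using tg_C1, kn_C1.
  - intros s Hs. apply Rgt_not_eq, osc_norm_pos, Hs.
Qed.

Lemma osc_cos_C1 : C1_on a b osc_cos.
Proof. apply C1_on_mult; [apply tg_C1 | apply osc_inv_norm_C1]. Qed.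

Lemma osc_sin_C1 : C1_on a b osc_sin.
Proof. apply C1_on_mult; [apply kn_C1 | apply osc_inv_norm_C1]. Qed.

Lemma osc_cos_sin_Derive s : I s ->
  osc_cos s * Derive osc_cos s + osc_sin s * Derive osc_sin s = 0.
Proof.
  intros Hs.
  assert (Hd : is_derive (fun t => osc_cos t * osc_cos t + osc_sin t * osc_sin t) s
    (Derive osc_cos s * osc_cos s + osc_cos s * Derive osc_cos s
     + (Derive osc_sin s * osc_sin s + osc_sin s * Derive osc_sin s))).
  { apply (is_derive_plus (V := R_NormedModule));
      [apply (is_derive_mult osc_cos osc_cos) | apply (is_derive_mult osc_sin osc_sin)].
    all: solve [ intros; apply Rmult_comm
               | apply (C1_on_is_derive a b); [apply osc_cos_C1 | exact Hs]
               | apply (C1_on_is_derive a b); [apply osc_sin_C1 | exact Hs] ]. }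
  pose proof (is_derive_const_on a b _ 1 s osc_cos_sin_sqr Hs) as Hconst.
  pose proof (is_derive_unique_value _ _ _ _ Hd Hconst). lra.
Qed.

Lemma osc_curv_continuous s : I s -> continuous osc_curv s.
Proof.
  intros Hs. unfold osc_curv.
  apply (continuous_plus (V := R_NormedModule)); [apply kg_continuous, Hs|].
  apply (continuous_opp (V := R_NormedModule)), (continuous_plus (V := R_NormedModule)).
  - apply (continuous_mult (K := R_AbsRing));
      [apply (C1_on_continuous a b), Hs; apply osc_cos_C1 | apply osc_sin_C1, Hs].
  - apply (continuous_opp (V := R_NormedModule)), (continuous_mult (K := R_AbsRing));
      [apply (C1_on_continuous a b), Hs; apply osc_sin_C1 | apply osc_cos_C1, Hs].
Qed.

Lemma has_vderive_U_osc s : I s -> has_vderive U s (vscal (- osc_norm s) (osc_perp s)).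
Proof.
  intros Hs. pose proof (osc_norm_pos s Hs).
  replace (vscal (- osc_norm s) (osc_perp s))
    with (vadd (vscal (- kn s) (T s)) (vscal (- tg s) (V s))).
  - apply frame, Hs.
  - unfold osc_perp, osc_sin, osc_cos. apply vec3_eq; simpl; field; lra.
Qed.

Lemma has_vderive_osc_unit s : I s ->
  has_vderive osc_unit s (vscal (osc_curv s) (osc_perp s)).
Proof.
  intros Hs. destruct (frame s Hs) as (_ & _ & _ & _ & _ & HT & HV & _).
  assert (Hd : has_vderive osc_unit s
    (vadd (vadd (vscal (Derive osc_cos s) (T s))
                (vscal (osc_cos s) (vadd (vscal (kg s) (V s)) (vscal (kn s) (U s)))))
          (vadd (vscal (- Derive osc_sin s) (V s))
                (vscal (- osc_sin s) (vadd (vscal (- kg s) (T s)) (vscal (tg s) (U s))))))).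
  { unfold osc_unit. apply has_vderive_vadd;
      [apply (has_vderive_vscal osc_cos T) | apply (has_vderive_vscal (fun t => - osc_sin t) V)];
      auto.
    - apply (C1_on_is_derive a b); [apply osc_cos_C1 | exact Hs].
    - apply (is_derive_opp (V := R_NormedModule)).
      apply (C1_on_is_derive a b); [apply osc_sin_C1 | exact Hs]. }
  rewrite rotated_frame_deriv_unit in Hd.
  - exact Hd.
  - apply osc_cos_sin_sqr, Hs.
  - apply osc_cos_sin_Derive, Hs.
  - pose proof (osc_norm_pos s Hs). unfold osc_cos, osc_sin. field. lra.
Qed.

Lemma has_vderive_osc_perp s : I s ->
  has_vderive osc_perp s (vsub (vscal (osc_norm s) (U s)) (vscal (osc_curv s) (osc_unit s))).
Proof.
  intros Hs. destruct (frame s Hs) as (_ & _ & _ & _ & _ & HT & HV & _).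
  assert (Hd : has_vderive osc_perp s
    (vadd (vadd (vscal (Derive osc_sin s) (T s))
                (vscal (osc_sin s) (vadd (vscal (kg s) (V s)) (vscal (kn s) (U s)))))
          (vadd (vscal (Derive osc_cos s) (V s))
                (vscal (osc_cos s) (vadd (vscal (- kg s) (T s)) (vscal (tg s) (U s))))))).
  { unfold osc_perp. apply has_vderive_vadd;
      [apply (has_vderive_vscal osc_sin T) | apply (has_vderive_vscal osc_cos V)]; auto.
    - apply (C1_on_is_derive a b); [apply osc_sin_C1 | exact Hs].
    - apply (C1_on_is_derive a b); [apply osc_cos_C1 | exact Hs]. }
  rewrite (rotated_frame_deriv_perp _ _ _ _ _ _ _ _ _ _ (osc_norm s)) in Hd.
  - exact Hd.
  - apply osc_cos_sin_sqr, Hs.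
  - apply osc_cos_sin_Derive, Hs.
  - pose proof (osc_norm_pos s Hs). pose proof (osc_norm_sqr s Hs) as Hsqr.
    unfold osc_cos, osc_sin.
    transitivity ((tg s * tg s + kn s * kn s) / osc_norm s); [field; lra|].
    rewrite <- Hsqr. field. lra.
Qed.

Lemma dot_osc_unit_self s : I s -> dot (osc_unit s) (osc_unit s) = 1.
Proof.
  intros Hs. destruct (darboux_orthonormal s Hs) as (HT & HV & _ & HTV & _).
  unfold osc_unit.
  rewrite !dot_vadd_l, !dot_vadd_r, !dot_vscal_l, !dot_vscal_r, HT, HV, (dot_comm (V s)), HTV.
  transitivity (osc_cos s * osc_cos s + osc_sin s * osc_sin s);
    [ring | apply osc_cos_sin_sqr, Hs].
Qed.

Lemma osc_darboux_unit s : I s -> vunit (osc_darboux T V kn tg s) = osc_unit s.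
Proof.
  intros Hs. pose proof (osc_norm_pos s Hs). pose proof (dot_osc_unit_self s Hs).
  replace (osc_darboux T V kn tg s) with (vscal (osc_norm s) (osc_unit s)).
  - rewrite vunit_vscal by (auto; lra). rewrite Rabs_pos_eq by lra.
    replace (osc_norm s / osc_norm s) with 1 by (field; lra). apply vscal_1.
  - unfold osc_darboux, osc_unit, vsub, osc_cos, osc_sin.
    apply vec3_eq; simpl; field; lra.
Qed.

Lemma dot_U_osc_unit s : I s -> dot (U s) (osc_unit s) = 0.
Proof.
  intros Hs. destruct (darboux_orthonormal s Hs) as (_ & _ & _ & _ & HTU & HVU).
  unfold osc_unit. rewrite dot_comm, dot_vadd_l, !dot_vscal_l, HTU, HVU. ring.
Qed.

Lemma osc_parseval s d : I s ->
  dot d d = dot (osc_unit s) d ^ 2 + dot (osc_perp s) d ^ 2 + dot (U s) d ^ 2.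
Proof.
  intros Hs. rewrite (darboux_parseval s d Hs).
  unfold osc_unit, osc_perp. rewrite !dot_vadd_l, !dot_vscal_l.
  pose proof (osc_cos_sin_sqr s Hs) as Hunit.
  transitivity ((osc_cos s * osc_cos s + osc_sin s * osc_sin s)
                * (dot (T s) d ^ 2 + dot (V s) d ^ 2) + dot (U s) d ^ 2); [|ring].
  rewrite Hunit. ring.
Qed.

Lemma is_derive_dot_U s d : I s ->
  is_derive (fun t => dot (U t) d) s (- osc_norm s * dot (osc_perp s) d).
Proof.
  intros Hs. rewrite <- dot_vscal_l. apply is_derive_dot_const, has_vderive_U_osc, Hs.
Qed.

Lemma is_derive_dot_osc_unit s d : I s ->
  is_derive (fun t => dot (osc_unit t) d) s (osc_curv s * dot (osc_perp s) d).
Proof.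
  intros Hs. rewrite <- dot_vscal_l. apply is_derive_dot_const, has_vderive_osc_unit, Hs.
Qed.

Lemma is_derive_dot_osc_perp s d : I s ->
  is_derive (fun t => dot (osc_perp t) d) s
    (osc_norm s * dot (U s) d - osc_curv s * dot (osc_unit s) d).
Proof.
  intros Hs.
  replace (osc_norm s * dot (U s) d - osc_curv s * dot (osc_unit s) d)
    with (dot (vsub (vscal (osc_norm s) (U s)) (vscal (osc_curv s) (osc_unit s))) d)
    by (unfold vsub; rewrite dot_vadd_l, !dot_vscal_l; ring).
  apply is_derive_dot_const, has_vderive_osc_perp, Hs.
Qed.

Hypothesis nonempty : Rbar_lt a b.

Lemma isophote_Do_slant_helix : isophote I U -> Do_slant_helix I T V kn tg.
Proof.
  intros (l & k & Hl & Hk). pose proof (proj1 (vnorm_eq1 l) Hl) as Hll.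
  destruct (in_interval_nonempty a b nonempty) as [s0 Hs0].
  assert (Hperp : forall s, I s -> dot (osc_perp s) l = 0).
  { intros s Hs. pose proof (osc_norm_pos s Hs).
    pose proof (is_derive_unique_value _ _ _ _ (is_derive_dot_U s l Hs)
                  (is_derive_const_on a b _ k s Hk Hs)) as Hzero.
    apply Rmult_integral in Hzero. destruct Hzero; [lra | assumption]. }
  assert (Hsqr : forall s, I s -> dot (osc_unit s) l * dot (osc_unit s) l = 1 - k * k).
  { intros s Hs. pose proof (osc_parseval s l Hs) as Hsum.
    rewrite Hperp, Hk, Hll in Hsum by exact Hs. lra. }
  exists l, (dot (osc_unit s0) l). split; [exact Hl|]. intros s Hs.
  rewrite osc_darboux_unit by exact Hs.
  apply (continuous_eq_of_sqr_eq a b (fun t => dot (osc_unit t) l)); auto.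
  - intros u Hu. apply (ex_derive_continuous (V := R_NormedModule)).
    eexists. apply is_derive_dot_osc_unit, Hu.
  - intros u t Hu Ht. rewrite !Hsqr; auto.
Qed.

Lemma osc_perp_zero_or_flat d c : dot d d = 1 ->
  (forall s, I s -> dot (osc_unit s) d = c) ->
  (forall s, I s -> dot (osc_perp s) d = 0) \/ (forall s, I s -> osc_curv s = 0).
Proof.
  intros Hdd Hc.
  assert (Hmul : forall s, I s -> osc_curv s * dot (osc_perp s) d = 0).
  { intros s Hs. apply (is_derive_unique_value (fun t => dot (osc_unit t) d) s).
    - apply is_derive_dot_osc_unit, Hs.
    - apply (is_derive_const_on a b _ c); auto. }
  assert (Hsum : forall s, I s -> c * c + dot (osc_perp s) d ^ 2 + dot (U s) d ^ 2 = 1).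
  { intros s Hs. rewrite <- Hdd, (osc_parseval s d Hs), Hc by exact Hs. ring. }
  destruct (Rlt_dec (c * c) 1) as [Hlt | Hge].
  - apply (mul_eq0_on_interval a b osc_curv (fun t => dot (osc_perp t) d)
             (fun t => osc_norm t * dot (U t) d - osc_curv t * dot (osc_unit t) d)).
    + exact osc_curv_continuous.
    + intros s Hs. apply is_derive_dot_osc_perp, Hs.
    + exact Hmul.
    (* where both vanish, |<U, d>| = sqrt (1 - c^2) > 0 makes the derivative nonzero *)
    + intros s Hs Hperp Hflat. rewrite Hflat.
      pose proof (osc_norm_pos s Hs). pose proof (Hsum s Hs) as Hs1. rewrite Hperp in Hs1.
      intros Hzero. assert (dot (U s) d = 0) by nra. nra.
  - left. intros s Hs. pose proof (Hsum s Hs). nra.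
Qed.

Lemma Do_slant_helix_isophote : Do_slant_helix I T V kn tg -> isophote I U.
Proof.
  intros (d & c & Hd & Hc).
  destruct (in_interval_nonempty a b nonempty) as [s0 Hs0].
  assert (Hc' : forall s, I s -> dot (osc_unit s) d = c)
    by (intros s Hs; rewrite <- osc_darboux_unit; auto).
  destruct (osc_perp_zero_or_flat d c (proj1 (vnorm_eq1 d) Hd) Hc') as [Hperp | Hflat].
  - exists d, (dot (U s0) d). split; [exact Hd|]. intros s Hs.
    apply (is_derive_zero_const a b (fun t => dot (U t) d)); auto.
    intros u Hu. replace 0 with (- osc_norm u * dot (osc_perp u) d)
      by (rewrite Hperp by exact Hu; ring).
    apply is_derive_dot_U, Hu.
  - exists (osc_unit s0), 0. split; [apply vnorm_eq1, dot_osc_unit_self, Hs0|].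
    intros s Hs.
    rewrite (has_vderive_zero_const a b osc_unit) with s0 s; auto.
    + apply dot_U_osc_unit, Hs.
    + intros u Hu. replace vzero with (vscal (osc_curv u) (osc_perp u)).
      * apply has_vderive_osc_unit, Hu.
      * rewrite Hflat by exact Hu. apply vec3_eq; simpl; ring.
Qed.

Variables (y1 y2 y3 Rf : R -> R) (gamma : R -> vec3).
Hypotheses (y1_smooth : smooth_on I y1) (y2_smooth : smooth_on I y2)
  (y3_smooth : smooth_on I y3).
Hypothesis gamma_eq : forall s, I s ->
  gamma s = vadd (alpha s) (vadd (vscal (y1 s) (T s))
              (vadd (vscal (y2 s) (V s)) (vscal (y3 s) (U s)))).
Hypothesis gamma_deriv : forall s, I s -> has_vderive gamma s (vscal (Rf s) (U s)) /\ Rf s <> 0.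

Lemma Rf_eq s : I s -> Rf s = y1 s * kn s + y2 s * tg s + Derive y3 s.
Proof.
  intros Hs. destruct (frame s Hs) as (Halpha & _ & _ & _ & _ & HT & HV & HU).
  assert (Hy : forall y, smooth_on I y -> is_derive y s (Derive y s))
    by (intros y Hy; apply (C1_on_is_derive a b); [apply smooth_C1_on, Hy | exact Hs]).
  pose proof (has_vderive_vadd _ _ _ _ _ Halpha
    (has_vderive_vadd _ _ _ _ _ (has_vderive_vscal y1 T _ _ _ (Hy y1 y1_smooth) HT)
      (has_vderive_vadd _ _ _ _ _ (has_vderive_vscal y2 V _ _ _ (Hy y2 y2_smooth) HV)
        (has_vderive_vscal y3 U _ _ _ (Hy y3 y3_smooth) HU)))) as Hd.
  apply (has_vderive_ext_on a b _ gamma) in Hd; [|exact gamma_eq | exact Hs].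
  pose proof (has_vderive_unique _ _ _ _ (proj1 (gamma_deriv s Hs)) Hd) as Hgamma'.
  apply (f_equal (fun v => dot v (U s))) in Hgamma'.
  destruct (darboux_orthonormal s Hs) as (_ & _ & HUU & _ & HTU & HVU).
  rewrite !dot_vadd_l, !dot_vscal_l, !dot_vadd_l, !dot_vscal_l, HUU, HTU, HVU in Hgamma'.
  lra.
Qed.

Lemma Rf_continuous s : I s -> continuous Rf s.
Proof.
  intros Hs. apply (continuous_ext_loc _ (fun t => y1 t * kn t + y2 t * tg t + Derive y3 t)).
  - apply (locally_on_interval a b); [|exact Hs].
    intros u Hu. symmetry. apply Rf_eq, Hu.
  - apply (continuous_plus (V := R_NormedModule)); [apply (continuous_plus (V := R_NormedModule))|].
    + apply (continuous_mult (K := R_AbsRing)).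
      * apply (C1_on_continuous a b); [apply smooth_C1_on, y1_smooth | exact Hs].
      * apply (C1_on_continuous a b); [apply kn_C1 | exact Hs].
    + apply (continuous_mult (K := R_AbsRing)).
      * apply (C1_on_continuous a b); [apply smooth_C1_on, y2_smooth | exact Hs].
      * apply (C1_on_continuous a b); [apply tg_C1 | exact Hs].
    + apply (smooth_C1_on a b y3 y3_smooth s Hs).
Qed.

Lemma vunit_vDerive_gamma s : I s ->
  vunit (vDerive gamma s) = vscal (Rf s / Rabs (Rf s)) (U s).
Proof.
  intros Hs. destruct (gamma_deriv s Hs) as [Hd HRf].
  rewrite (has_vderive_vDerive _ _ _ Hd). apply vunit_vscal; [|exact HRf].
  apply darboux_orthonormal, Hs.
Qed.

Lemma gamma_regular s : I s -> ex_vderive gamma s /\ vDerive gamma s <> vzero.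
Proof.
  intros Hs. destruct (gamma_deriv s Hs) as [Hd HRf]. split.
  - destruct Hd as (H1 & H2 & H3). split; [|split]; eexists; eassumption.
  - rewrite (has_vderive_vDerive _ _ _ Hd). intros Hzero.
    apply (f_equal (fun v => dot v v)) in Hzero.
    rewrite dot_vscal_l, dot_vscal_r, (proj1 (proj2 (proj2 (darboux_orthonormal s Hs)))) in Hzero.
    unfold dot in Hzero; simpl in Hzero. apply HRf. nra.
Qed.

Lemma general_helix_iff_isophote : general_helix I gamma <-> isophote I U.
Proof.
  destruct (in_interval_nonempty a b nonempty) as [s0 Hs0].
  set (sg := Rf s0 / Rabs (Rf s0)).
  assert (Hsg : forall s, I s -> Rf s / Rabs (Rf s) = sg).
  { intros s Hs. apply sign_eq_of_mul_pos.
    apply (continuous_nonzero_same_sign a b Rf); auto.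
    intros u Hu. split; [apply Rf_continuous, Hu | apply gamma_deriv, Hu]. }
  assert (Hsg2 : sg * sg = 1) by (apply sign_sqr, gamma_deriv, Hs0).
  assert (Hdot : forall s d, I s -> dot (vunit (vDerive gamma s)) d = sg * dot (U s) d)
    by (intros s d Hs; rewrite vunit_vDerive_gamma, dot_vscal_l, Hsg; auto).
  split.
  - intros (_ & d & k & Hd & Hk). exists d, (sg * k). split; [exact Hd|].
    intros s Hs. rewrite <- (Hk s Hs), Hdot by exact Hs.
    transitivity (sg * sg * dot (U s) d); [rewrite Hsg2|]; ring.
  - intros (l & k & Hl & Hk). split; [exact gamma_regular|].
    exists l, (sg * k). split; [exact Hl|].
    intros s Hs. rewrite Hdot, Hk; auto.
Qed.

End DarbouxFrame.

Theorem theorem3p22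
  (a b : Rbar) (alpha T V U : R -> vec3) (kg kn tg : R -> R)
  (y1 y2 y3 Rf : R -> R) (gamma : R -> vec3) :
  Rbar_lt a b ->
  vsmooth_on (in_interval a b) alpha ->
  vsmooth_on (in_interval a b) U ->
  darboux_frame (in_interval a b) alpha T V U kg kn tg ->
  (forall s, in_interval a b s -> kn s <> 0 \/ tg s <> 0) ->
  smooth_on (in_interval a b) y1 ->
  smooth_on (in_interval a b) y2 ->
  smooth_on (in_interval a b) y3 ->
  (forall s, in_interval a b s ->
     gamma s = vadd (alpha s) (vadd (vscal (y1 s) (T s))
                 (vadd (vscal (y2 s) (V s)) (vscal (y3 s) (U s))))) ->
  (forall s, in_interval a b s ->
     has_vderive gamma s (vscal (Rf s) (U s)) /\ Rf s <> 0) ->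
  (general_helix (in_interval a b) gamma <-> isophote (in_interval a b) U) /\
  (isophote (in_interval a b) U <-> Do_slant_helix (in_interval a b) T V kn tg).
Proof.
  intros Hab Halpha HU Hframe Hnondeg Hy1 Hy2 Hy3 Hgamma Hgamma'.
  split; [|split].
  - apply (general_helix_iff_isophote a b alpha T V U kg kn tg) with y1 y2 y3 Rf; assumption.
  - apply (isophote_Do_slant_helix a b alpha T V U kg kn tg); assumption.
  - apply (Do_slant_helix_isophote a b alpha T V U kg kn tg); assumption.
Qed.
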